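(* Let $\beta\in(0,1]$, $m\ge0$ an integer, and $\theta=(k_r)$ a lacunary sequence. If $\liminf_r q_r>1$, then $S^\beta(F,\Delta^m)\subset S_\theta^\beta(F,\Delta^m)$.
   Context: A fuzzy number is a map $X:\mathbb{R}\to[0,1]$ which is normal, fuzzy convex, upper semicontinuous, with compact closure of $\{t:X(t)>0\}$; $L(\mathbb{R})$ is the set of fuzzy numbers. Level sets $[X]^\alpha=\{t:X(t)\ge\alpha\}$ ($\alpha\in(0,1]$), $[X]^0=\overline{\{t:X(t)>0\}}$, are compact intervals $[u^\alpha,v^\alpha]$. Subtraction: $[X-Y]^\alpha=[u_1^\alpha-v_2^\alpha,v_1^\alpha-u_2^\alpha]$. Metric: $d(X,Y)=\sup_{\alpha\in[0,1]}\max\{|u_1^\alpha-u_2^\alpha|,|v_1^\alpha-v_2^\alpha|\}$. $(\Delta^0X)_k=X_k$, $(\Delta^1X)_k=X_k-X_{k+1}$, $(\Delta^mX)_k=(\Delta^1(\Delta^{m-1}X))_k$. A lacunary sequence is an increasing integer sequence $\theta=(k_r)_{r\ge0}$ with $k_0=0$, $h_r=k_r-k_{r-1}\to\infty$; $I_r=(k_{r-1},k_r]$, $q_r=k_r/k_{r-1}$. $S_\theta^\beta(F,\Delta^m)$: sequences $X$ of fuzzy numbers with some $X_0\in L(\mathbb{R})$ such that for all $\varepsilon>0$, $\lim_r\frac{1}{h_r^\beta}|\{k\in I_r:d(\Delta^mX_k,X_0)\ge\varepsilon\}|=0$. $S^\beta(F,\Delta^m)$: sequences $X$ with some $X_0\in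 L(\mathbb{R})$ such that for all $\varepsilon>0$, $\lim_{n\to\infty}\frac{1}{n^\beta}|\{k\le n:d(\Delta^mX_k,X_0)\ge\varepsilon\}|=0$. *)

From HB Require Import structures.
From mathcomp Require Import all_boot all_order all_algebra.
From mathcomp Require Import all_classical all_reals all_analysis.
Set Implicit Arguments. Unset Strict Implicit. Unset Printing Implicit Defensive.
Import Order.TTheory GRing.Theory Num.Theory.
Import numFieldNormedType.Exports.
Local Open Scope classical_set_scope.
Local Open Scope ring_scope.

Section Fuzzy.
Variable R : realType.

(* A fuzzy number: normal, fuzzy convex, upper semicontinuous map R -> [0,1]
   whose support has compact closure. *)
Definition fuzzy_number (X : R -> R) : Prop :=
  [/\ (forall t, 0 <= X t <= 1),
      (exists t, X t = 1),
      (forall s t l, 0 <= l <= 1 -> Num.min (X s) (X t) <= X (l * s + (1 - l) * t)),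
      (forall a : R, open [set t | X t < a])
    & compact (closure [set t | 0 < X t])].

Definition levelset (X : R -> R) (a : R) : set R :=
  if a == 0 then closure [set t | 0 < X t] else [set t | a <= X t].

Definition lend (X : R -> R) (a : R) : R := inf (levelset X a).
Definition rend (X : R -> R) (a : R) : R := sup (levelset X a).

(* X - Y : the fuzzy number whose a-level set is
   [u1^a - v2^a, v1^a - u2^a]; its membership function is recovered from the
   level sets as t |-> sup ({0} U {a in (0,1] | t in [X-Y]^a}). *)
Definition fsub (X Y : R -> R) : R -> R := fun t =>
  sup ([set 0] `|` [set a | 0 < a <= 1 /\
         lend X a - rend Y a <= t <= rend X a - lend Y a]).

Definition fdist (X Y : R -> R) : R :=
  sup [set x | exists2 a, 0 <= a <= 1 &
        x = Num.max `|lend X a - lend Y a| `|rend X a - rend Y a|].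

Fixpoint Delta (m : nat) (X : nat -> R -> R) : nat -> R -> R :=
  match m with
  | 0 => X
  | m'.+1 => fun k => fsub (Delta m' X k) (Delta m' X k.+1)
  end.

End Fuzzy.

Definition lacunary (theta : nat -> nat) : Prop :=
  [/\ theta 0 = 0%N,
      (forall r, (theta r < theta r.+1)%N)
    & (forall M : nat, exists N : nat, forall r, (N <= r)%N -> (M <= theta r.+1 - theta r)%N)].

Definition hr (theta : nat -> nat) (r : nat) : nat := (theta r - theta r.-1)%N.

Definition qr (R : realType) (theta : nat -> nat) (r : nat) : R :=
  (theta r)%:R / (theta r.-1)%:R.

(* number of k in the integer interval (a, b] with P k *)
Definition count_between (P : pred nat) (a b : nat) : nat :=
  count P (iota a.+1 (b - a)).

Definition S_theta (R : realType) (theta : nat -> nat) (beta : R) (m : nat)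
  : set (nat -> R -> R) :=
  [set X | (forall k, fuzzy_number (X k)) /\
     exists X0 : R -> R, fuzzy_number X0 /\
       forall eps : R, 0 < eps ->
         (fun r : nat =>
            (count_between (fun k => eps <= fdist (Delta m X k) X0)
                           (theta r) (theta r.+1))%:R
            / ((hr theta r.+1)%:R `^ beta)) @ \oo --> (0 : R)].

Definition S_stat (R : realType) (beta : R) (m : nat) : set (nat -> R -> R) :=
  [set X | (forall k, fuzzy_number (X k)) /\
     exists X0 : R -> R, fuzzy_number X0 /\
       forall eps : R, 0 < eps ->
         (fun n : nat =>
            (count_between (fun k => eps <= fdist (Delta m X k) X0) 0 n)%:R
            / (n%:R `^ beta)) @ \oo --> (0 : R)].

(** Once [q_r >= c > 1], the block [I_(r+1)] has length [h_(r+1) >= (1 - 1/c) k_(r+1)],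
    so its count of bad indices, normalised by [h_(r+1)^beta], is at most
    [(1 - 1/c)^-beta] times the count over the initial segment [[1, k_(r+1)]]
    normalised by [k_(r+1)^beta]; the latter tends to [0] because [k_r -> oo]. *)
From HB Require Import structures.
From mathcomp Require Import all_boot all_order all_algebra.
From mathcomp Require Import all_classical all_reals all_analysis.
From mathcomp Require Import lra.

Set Implicit Arguments.
Unset Strict Implicit.
Unset Printing Implicit Defensive.

Import Order.TTheory GRing.Theory Num.Theory.
Import numFieldNormedType.Exports.
Local Open Scope classical_set_scope.
Local Open Scope ring_scope.

Lemma limn_einf_gt_near (R : realType) (u : nat -> R) (l : R) :
  (l%:E < limn_einf (fun n => (u n)%:E))%E ->
  exists2 c, l < c & \forall n \near \oo, c <= u n.
Proof.
rewrite limn_einf_lim (cvg_lim _ (@cvg_einfs_sup R (fun n => (u n)%:E))) //.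
case/ereal_sup_gt => _ [N _ <-] l_lt_infs.
have [c l_lt_c c_le_infs] : exists2 c, l < c & (c%:E <= einfs (fun n => (u n)%:E) N)%E.
  move: l_lt_infs; case: (einfs _ N) => [x | |] //=.
  - by rewrite lte_fin => lx; exists ((l + x) / 2); rewrite ?lee_fin; lra.
  - by move=> _; exists (l + 1); rewrite ?leey //; lra.
exists c => //; exists N => // n /= Nn.
rewrite -lee_fin; apply: (le_trans c_le_infs).
by apply: ereal_inf_lbound; exists n.
Qed.

Lemma cvgn_increasing_nat (f : nat -> nat) :
  (forall n, (f n < f n.+1)%N) -> f @ \oo --> \oo.
Proof.
move=> f_lt P [N _ PN]; exists N => // n /= Nn; apply: PN.
have id_le_f k : (k <= f k)%N by elim: k => // k IH; exact: leq_ltn_trans IH (f_lt k).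
exact: leq_trans Nn (id_le_f n).
Qed.

Lemma count_between_le_prefix (P : pred nat) (a b : nat) :
  (a <= b)%N -> (count_between P a b <= count_between P 0 b)%N.
Proof.
move=> ab; rewrite /count_between subn0 -{2}(subnKC ab) iotaD count_cat add1n.
exact: leq_addl.
Qed.

Lemma ratio_ge_gap (R : realFieldType) (a b c : R) :
  0 <= a -> 0 < c -> c <= b / a -> 0 < a /\ (1 - c^-1) * b <= b - a.
Proof.
rewrite le_eqVlt => /orP[/eqP<- | a_gt0 c_gt0]; first by rewrite invr0 mulr0; lra.
rewrite ler_pdivlMr // => ca_le_b; split => //.
have : a <= b / c by rewrite ler_pdivlMr // mulrC.
by rewrite mulrBl mul1r mulrC; lra.
Qed.

Lemma ratio_ge_gap_powR (R : realType) (a b c beta : R) :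
  0 <= a -> 1 < c -> c <= b / a -> 0 <= beta ->
  0 < b /\ (1 - c^-1) `^ beta * b `^ beta <= (b - a) `^ beta.
Proof.
move=> a_ge0 c_gt1 ratio beta_ge0.
have [a_gt0 gap] := ratio_ge_gap a_ge0 (lt_trans ltr01 c_gt1) ratio.
have b_gt0 : 0 < b by move: ratio; rewrite ler_pdivlMr //; nra.
have K_ge0 : 0 <= 1 - c^-1 by rewrite subr_ge0 invf_le1; lra.
split => //; rewrite -powRM ?(ltW b_gt0) //.
have Kb_ge0 := mulr_ge0 K_ge0 (ltW b_gt0).
by apply: ge0_ler_powR; rewrite ?nnegrE ?(le_trans Kb_ge0 gap).
Qed.

Lemma block_density_le (R : realType) (P : pred nat) (k k' : nat) (c beta : R) :
  1 < c -> 0 <= beta -> c <= k'%:R / k%:R -> (k <= k')%N ->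
  (count_between P k k')%:R / ((k' - k)%N%:R `^ beta)
    <= ((1 - c^-1) `^ beta)^-1 * ((count_between P 0 k')%:R / (k'%:R `^ beta)).
Proof.
move=> c_gt1 beta_ge0 ratio kk'.
have [k'_gt0 gap] := ratio_ge_gap_powR (ler0n R k) c_gt1 ratio beta_ge0.
have K_gt0 : 0 < (1 - c^-1) `^ beta by rewrite powR_gt0 // subr_gt0 invf_lt1 //; lra.
have lower_gt0 := mulr_gt0 K_gt0 (powR_gt0 beta k'_gt0).
rewrite mulrCA -invfM natrB //.
apply: (@le_trans _ _ ((count_between P 0 k')%:R / (k'%:R - k%:R) `^ beta)).
  by rewrite ler_wpM2r ?invr_ge0 ?powR_ge0 // ler_nat count_between_le_prefix.
by rewrite ler_wpM2l // lef_pV2 ?posrE // (lt_le_trans lower_gt0).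
Qed.

Theorem theorem2p9 (R : realType) (beta : R) (m : nat) (theta : nat -> nat) :
  0 < beta <= 1 ->
  lacunary theta ->
  (1 < limn_einf (fun r => (qr R theta r)%:E))%E ->
  S_stat beta m `<=` S_theta theta beta m.
Proof.
move=> /andP[beta_gt0 _] [_ theta_lt _] /limn_einf_gt_near[c c_gt1 q_ge_c].
move=> X [X_fuzzy [X0 [X0_fuzzy X_stat]]]; split => //.
exists X0; split => // eps eps_gt0.
set P := fun k => eps <= fdist (Delta m X k) X0.
set density := fun n : nat => (count_between P 0 n)%:R / (n%:R `^ beta).
set K := (1 - c^-1) `^ beta.
apply: (@squeeze_cvgr _ _ _ _ (cst 0) (fun r => K^-1 * density (theta r.+1))).
- near=> r; apply/andP; split; first by rewrite divr_ge0 ?powR_ge0.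
  apply: block_density_le c_gt1 (ltW beta_gt0) _ (ltnW (theta_lt r)).
  near: r; case: q_ge_c => N _ q_ge_c; exists N => // r /= Nr.
  exact: q_ge_c (leqW Nr).
- exact: cvg_cst.
- rewrite -(mulr0 K^-1); apply: cvgMr.
  apply: (cvg_comp _ density (cvgn_increasing_nat (fun r => theta_lt r.+1))).
  exact: X_stat.
Unshelve. all: by end_near.
Qed.
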